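(* For every integer $n\geq 0$, \[ b_{n}^{(2)}(x)=\sum_{l=0}^{n}\binom{n}{l}\frac{B_{l}\,b_{n-l}(x)}{l+1}. \]
   Context: For $k\in\mathbb{Z}$, the polylogarithm is $Li_k(x)=\sum_{n=1}^{\infty}\frac{x^n}{n^k}$. The poly-Bernoulli polynomials of the second kind $b_n^{(k)}(x)$ are defined by the generating function \[ \frac{Li_{k}(1-e^{-t})}{\log(1+t)}(1+t)^{x}=\sum_{n=0}^{\infty}b_{n}^{(k)}(x)\frac{t^{n}}{n!}. \] The Bernoulli polynomials of the second kind $b_n(x)$ are defined by $\frac{t}{\log(1+t)}(1+t)^x=\sum_{n=0}^{\infty}b_n(x)\frac{t^n}{n!}$. The Bernoulli numbers $B_n$ are defined by $\frac{t}{e^t-1}=\sum_{n=0}^{\infty}B_n\frac{t^n}{n!}$. *)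

(* Generating functions are read as FORMAL power series in t
   over a characteristic-0 number field R; a series is its coefficient
   sequence nat -> R. *)
From mathcomp Require Import all_boot all_order all_algebra.
Set Implicit Arguments. Unset Strict Implicit. Unset Printing Implicit Defensive.
Import Order.TTheory GRing.Theory Num.Theory.
Local Open Scope ring_scope.

Section FPS.
Variable R : numFieldType.

Definition fps := nat -> R.

Definition fone : fps := fun n => (n == 0%N)%:R.

Definition fmul (a b : fps) : fps :=
  fun n => \sum_(i < n.+1) a i * b (n - i)%N.

Fixpoint fpow (a : fps) (m : nat) : fps :=
  match m with
  | 0 => fone
  | m'.+1 => fmul a (fpow a m')
  end.

(* composition f(u(t)), meaningful when u 0 = 0 *)
Definition fcomp (f u : fps) : fps :=
  fun n => \sum_(m < n.+1) f m * fpow u m n.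

(* division by t (for series with zero constant term) *)
Definition fshift (a : fps) : fps := fun n => a n.+1.

(* multiplicative inverse of a series with a 0 != 0 *)
Fixpoint finv_seq (a : fps) (n : nat) : seq R :=
  match n with
  | 0 => [:: (a 0%N)^-1]
  | n'.+1 => let s := finv_seq a n' in
      rcons s (- (a 0%N)^-1 * \sum_(i < n'.+1) a i.+1 * nth 0 s (n' - i)%N)
  end.

Definition finv (a : fps) : fps := fun n => nth 0 (finv_seq a n) n.

(* Li_k(u) = sum_{m>=1} u^m / m^k, k : int *)
Definition Li_ser (k : int) : fps :=
  fun m => if m == 0%N then 0 else ((m%:R : R) ^ k)^-1.

Definition one_minus_exp_neg : fps :=
  fun n => if n == 0%N then 0 else - ((-1) ^+ n) / (n`!)%:R.

Definition exp_minus_one : fps :=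
  fun n => if n == 0%N then 0 else 1 / (n`!)%:R.

Definition log1p_ser : fps :=
  fun n => if n == 0%N then 0 else - ((-1) ^+ n) / n%:R.

(* (1+t)^x = sum_n binom(x,n) t^n *)
Definition binom_ser (x : R) : fps :=
  fun n => (\prod_(i < n) (x - i%:R)) / (n`!)%:R.

(* Li_k(1-e^{-t}) / log(1+t) * (1+t)^x *)
Definition polyBer2_gf (k : int) (x : R) : fps :=
  fmul (fmul (fshift (fcomp (Li_ser k) one_minus_exp_neg))
             (finv (fshift log1p_ser)))
       (binom_ser x).

Definition polyBer2 (k : int) (n : nat) (x : R) : R :=
  (n`!)%:R * polyBer2_gf k x n.

(* Bernoulli polynomials of the second kind: t/log(1+t) (1+t)^x *)
Definition Ber2 (n : nat) (x : R) : R :=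
  (n`!)%:R * fmul (finv (fshift log1p_ser)) (binom_ser x) n.

(* Bernoulli numbers: t/(e^t-1) *)
Definition Bernoulli (n : nat) : R :=
  (n`!)%:R * finv (fshift exp_minus_one) n.

End FPS.

(* Since 1 - e^{-t} = u satisfies u' = 1 - u and Li_1(u) = -log(1 - u) = t,
   differentiating gives d/dt Li_2(1 - e^{-t}) = Li_1(u) u' / u = t / (e^t - 1).
   Hence Li_2(1 - e^{-t}) / t = sum_l B_l / (l + 1) t^l / l!, and the theorem is
   the Cauchy product of this series with t / log(1 + t) (1 + t)^x.
   The identities between formal series are proved on their truncations,
   which are polynomials: two truncations agree as soon as their derivatives
   and constant terms do. *)
From Pilot Require Import Defs.
From mathcomp Require Import all_boot all_order all_algebra.
From mathcomp Require Import zify ring.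
Set Implicit Arguments. Unset Strict Implicit. Unset Printing Implicit Defensive.
Import Order.TTheory GRing.Theory Num.Theory.
Local Open Scope ring_scope.

Section EqUpto.
Variable R : numFieldType.
Implicit Types p q r : {poly R}.

Definition eq_upto N p q := forall i, (i < N)%N -> p`_i = q`_i.

Lemma eq_upto_refl N p : eq_upto N p p. Proof. by []. Qed.

Lemma eq_upto_sym N p q : eq_upto N p q -> eq_upto N q p.
Proof. by move=> h i hi; rewrite h. Qed.

Lemma eq_upto_trans N p q r : eq_upto N p q -> eq_upto N q r -> eq_upto N p r.
Proof. by move=> h1 h2 i hi; rewrite h1 ?h2. Qed.

Lemma eq_upto_leq M N p q : (M <= N)%N -> eq_upto N p q -> eq_upto M p q.
Proof. by move=> hMN h i hi; apply: h; apply: leq_trans hMN. Qed.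

Lemma eq_uptoN N p q : eq_upto N p q -> eq_upto N (- p) (- q).
Proof. by move=> h i hi; rewrite !coefN h. Qed.

Lemma eq_uptoD N p p' q q' :
  eq_upto N p p' -> eq_upto N q q' -> eq_upto N (p + q) (p' + q').
Proof. by move=> h1 h2 i hi; rewrite !coefD h1 ?h2. Qed.

Lemma eq_uptoB N p p' q q' :
  eq_upto N p p' -> eq_upto N q q' -> eq_upto N (p - q) (p' - q').
Proof. by move=> h1 h2; apply: eq_uptoD h1 (eq_uptoN h2). Qed.

Lemma eq_uptoM N p p' q q' :
  eq_upto N p p' -> eq_upto N q q' -> eq_upto N (p * q) (p' * q').
Proof.
move=> h1 h2 i hi; rewrite !coefM; apply: eq_bigr => j _.
by rewrite h1 ?h2 //; apply: leq_ltn_trans hi; rewrite ?leq_subr // -ltnS.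
Qed.

Lemma eq_uptoMl N p q r : eq_upto N q r -> eq_upto N (p * q) (p * r).
Proof. exact: eq_uptoM (@eq_upto_refl N p). Qed.

Lemma eq_uptoMr N p q r : eq_upto N p q -> eq_upto N (p * r) (q * r).
Proof. by move/eq_uptoM; apply. Qed.

Lemma eq_uptoXM N p q : eq_upto N.+1 ('X * p) ('X * q) -> eq_upto N p q.
Proof. by move=> h i hi; have := h i.+1 hi; rewrite !coefXM. Qed.

Lemma eq_upto_integ N p q :
  eq_upto N p^`() q^`() -> p`_0 = q`_0 -> eq_upto N.+1 p q.
Proof.
move=> h h0 [|i] // hi; have /eqP := h i hi; rewrite 2!coef_deriv.
by rewrite -subr_eq0 -mulrnBl mulrn_eq0 /= subr_eq0 => /eqP.
Qed.

Lemma coef_expr_eq0 p m i : p`_0 = 0 -> (i < m)%N -> (p ^+ m)`_i = 0.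
Proof.
move=> p0; elim: m i => [|m IH] i // hi.
rewrite exprS coefM big1 // => -[[|j] hj] _ /=; first by rewrite p0 mul0r.
by rewrite IH ?mulr0 //; lia.
Qed.

End EqUpto.

Section FpsTruncation.
Variable R : numFieldType.
Implicit Types a b c f u : fps R.

Definition fps_poly N a : {poly R} := \poly_(i < N) a i.

Lemma coef_fps_poly N a i : (i < N)%N -> (fps_poly N a)`_i = a i.
Proof. by move=> h; rewrite coef_poly h. Qed.

Lemma fmul_fps_poly N a b i :
  (i < N)%N -> fmul a b i = (fps_poly N a * fps_poly N b)`_i.
Proof.
move=> hi; rewrite coefM; apply: eq_bigr => j _.
by rewrite !coef_fps_poly //; apply: leq_ltn_trans hi; rewrite ?leq_subr // -ltnS.
Qed.

Lemma fps_poly_fmul N a b :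
  eq_upto N (fps_poly N (fmul a b)) (fps_poly N a * fps_poly N b).
Proof. by move=> i hi; rewrite coef_fps_poly // (fmul_fps_poly _ _ hi). Qed.

Lemma fps_poly_fpow N a m :
  eq_upto N (fps_poly N (fpow a m)) (fps_poly N a ^+ m).
Proof.
elim: m => [|m IH] /=; first by move=> i hi; rewrite coef_fps_poly // coef1.
by rewrite exprS; apply: eq_upto_trans (fps_poly_fmul _ _) (eq_uptoMl _ IH).
Qed.

Lemma fps_poly_fcomp N f u : u 0%N = 0 ->
  eq_upto N (fps_poly N (fcomp f u)) (\sum_(m < N) f m *: fps_poly N u ^+ m).
Proof.
move=> u0 i hi; rewrite coef_fps_poly // coef_sum /fcomp.
have u0' : (fps_poly N u)`_0 = 0 by rewrite coef_fps_poly // (leq_ltn_trans _ hi).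
rewrite (big_ord_widen N (fun m => f m * fpow u m i) hi) big_mkcond.
apply: eq_bigr => m _; rewrite coefZ; case: ifP => hm.
  by rewrite -(fps_poly_fpow _ _ hi) coef_fps_poly.
by rewrite coef_expr_eq0 ?mulr0 // ltnNge -ltnS hm.
Qed.

Lemma fmulA a b c n : fmul (fmul a b) c n = fmul a (fmul b c) n.
Proof.
have hn : (n < n.+1)%N by [].
rewrite (fmul_fps_poly _ _ hn) (fmul_fps_poly _ _ hn).
rewrite (eq_uptoMr _ (fps_poly_fmul a b) hn).
by rewrite (eq_uptoMl _ (fps_poly_fmul b c) hn) mulrA.
Qed.

Lemma size_finv_seq a n : size (finv_seq a n) = n.+1.
Proof. by elim: n => //= n IH; rewrite size_rcons IH. Qed.

Lemma nth_finv_seq a n i : (i <= n)%N -> nth 0 (finv_seq a n) i = Defs.finv a i.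
Proof.
elim: n => [|n IH] hi; first by case: i hi.
rewrite /= nth_rcons size_finv_seq.
case: ltngtP hi => // [h _|-> _]; first exact: IH.
by rewrite /Defs.finv /= nth_rcons size_finv_seq ltnn eqxx.
Qed.

Lemma finvS a n :
  Defs.finv a n.+1 =
  - (a 0%N)^-1 * \sum_(i < n.+1) a i.+1 * Defs.finv a (n - i)%N.
Proof.
rewrite {1}/Defs.finv /= nth_rcons size_finv_seq ltnn eqxx; congr (_ * _).
by apply: eq_bigr => i _; rewrite nth_finv_seq // leq_subr.
Qed.

Lemma fmul_finv a n : a 0%N != 0 -> fmul a (Defs.finv a) n = fone R n.
Proof.
move=> a0; case: n => [|n]; rewrite /fmul /fone.
  by rewrite big_ord1 /Defs.finv /= mulfV.
rewrite big_ord_recl /= subn0 finvS mulrA mulrN mulfV // mulN1r.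
rewrite addrC (eq_bigr (fun i : 'I_n.+1 => a i.+1 * Defs.finv a (n - i)%N)) //.
exact: subrr.
Qed.

End FpsTruncation.

Section DilogOfOneMinusExp.
Variable R : numFieldType.

Lemma natrS_neq0 n : (n.+1%:R : R) != 0.
Proof. by rewrite pnatr_eq0. Qed.

Lemma fact_neq0 n : ((n`!)%:R : R) != 0.
Proof. by rewrite pnatr_eq0 -lt0n fact_gt0. Qed.

Lemma divfactS (x : R) n : x / ((n.+1)`!)%:R *+ n.+1 = x / (n`!)%:R.
Proof.
rewrite -mulr_natr factS natrM invfM mulrA mulrAC -(mulrA x) mulVf ?mulr1 //.
exact: natrS_neq0.
Qed.

Lemma Li_ser_Posz k m :
  Li_ser R (Posz k) m = if m == 0%N then 0 else ((m%:R) ^+ k)^-1.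
Proof. by []. Qed.

Variable N : nat.

Definition omexp_poly := fps_poly N.+2 (one_minus_exp_neg R).
Definition exp_poly : {poly R} := \poly_(i < N.+2) ((i`!)%:R)^-1.
Definition expm1_div_poly := fps_poly N.+2 (fshift (exp_minus_one R)).
Definition bernoulli_poly :=
  fps_poly N.+2 (Defs.finv (fshift (exp_minus_one R))).
Definition Li1_omexp_poly := \sum_(m < N.+2) Li_ser R 1 m *: omexp_poly ^+ m.
Definition Li2_omexp_poly := \sum_(m < N.+2) Li_ser R 2 m *: omexp_poly ^+ m.

Local Notation U := omexp_poly.

Lemma omexp_poly0 : U`_0 = 0.
Proof. by rewrite coef_fps_poly. Qed.

Lemma deriv_omexp_poly : eq_upto N.+1 U^`() (1 - U).
Proof.
move=> i hi; have hi' : (i < N.+2)%N by rewrite ltnW.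
rewrite coef_deriv coefB coef1 (coef_fps_poly _ (hi : (i.+1 < N.+2)%N)).
rewrite (coef_fps_poly _ hi') /one_minus_exp_neg /= divfactS exprS mulN1r.
case: i {hi hi'} => [|i] /=; first by rewrite expr0 opprK subr0 mul1r invr1.
by rewrite opprK sub0r mulNr opprK.
Qed.

Lemma deriv_exp_poly : eq_upto N.+1 exp_poly^`() exp_poly.
Proof.
move=> i hi; rewrite coef_deriv !coef_poly ltnS hi ltnS ltnW //.
by rewrite -[X in X *+ _]mul1r divfactS mul1r.
Qed.

Lemma exp_poly_omexp : eq_upto N.+2 (exp_poly * (1 - U)) 1.
Proof.
apply: eq_upto_integ; last first.
  by rewrite coef0M coefB coef1 omexp_poly0 coef_poly /= subr0 invr1 mulr1.
rewrite derivM derivB -polyC1 derivC sub0r polyC1 -(subrr (exp_poly * (1 - U))).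
by rewrite -mulrN; apply: eq_uptoD (eq_uptoMr _ deriv_exp_poly)
  (eq_uptoMl _ (eq_uptoN deriv_omexp_poly)).
Qed.

Lemma exp_poly_mul_omexp : eq_upto N.+2 (exp_poly * U) ('X * expm1_div_poly).
Proof.
have h := eq_uptoB (@eq_upto_refl _ N.+2 exp_poly) exp_poly_omexp.
rewrite mulrBr mulr1 opprB addrCA subrr addr0 in h.
apply: eq_upto_trans h _ => -[|i] hi; rewrite coefB coefXM coef1 coef_poly hi /=.
  by rewrite invr1 subrr.
by rewrite subr0 coef_fps_poly 1?ltnW // /fshift /exp_minus_one div1r.
Qed.

Lemma deriv_Li1_omexp_poly :
  Li1_omexp_poly^`() = U^`() * \sum_(m < N.+1) U ^+ m.
Proof.
rewrite raddf_sum big_ord_recl Li_ser_Posz /= scale0r derivC add0r mulr_sumr.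
apply: eq_bigr => m _; rewrite derivZ deriv_exp Li_ser_Posz /= !expr1.
by rewrite -scaler_nat scalerA mulVf ?natrS_neq0 // scale1r.
Qed.

Lemma Li1_omexp_polyE : eq_upto N.+2 Li1_omexp_poly 'X.
Proof.
apply: eq_upto_integ; last first.
  rewrite coefX coef_sum big1 // => -[[|m] hm] _; rewrite coefZ /= ?mul0r //.
  by rewrite coef_expr_eq0 ?omexp_poly0 ?mulr0.
rewrite deriv_Li1_omexp_poly derivX.
have geom : (1 - U) * \sum_(m < N.+1) U ^+ m = 1 - U ^+ N.+1.
  rewrite -(expr1n _ N.+1) subrXX expr1n; congr (_ * _).
  by apply: eq_bigr => i _; rewrite expr1n mul1r.
apply: eq_upto_trans (eq_uptoMr _ deriv_omexp_poly) _; rewrite geom => i hi.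
by rewrite coefB coef_expr_eq0 ?omexp_poly0 ?subr0.
Qed.

Lemma deriv_Li2_omexp_poly :
  U * Li2_omexp_poly^`() = U^`() * Li1_omexp_poly.
Proof.
rewrite raddf_sum !mulr_sumr; apply: eq_bigr => -[[|k] hk] _ /=.
  by rewrite !Li_ser_Posz !scale0r raddf0 !mulr0.
rewrite derivZ deriv_exp !Li_ser_Posz /= expr1 -scaler_nat -!scalerAr scalerA.
rewrite mulrCA -exprS expr2 invfM -mulrA mulVf ?mulr1 //; exact: natrS_neq0.
Qed.

Lemma deriv_Li2_omexp_poly_expm1 :
  eq_upto N (Li2_omexp_poly^`() * expm1_div_poly) 1.
Proof.
apply: eq_uptoXM; rewrite mulr1 mulrCA.
apply: eq_upto_trans
  (eq_uptoMl _ (eq_upto_leq (leqnSn _) (eq_upto_sym exp_poly_mul_omexp))) _.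
rewrite mulrC -mulrA deriv_Li2_omexp_poly.
apply: eq_upto_trans (eq_uptoMl _ (eq_uptoM deriv_omexp_poly
  (eq_upto_leq (leqnSn _) Li1_omexp_polyE))) _.
rewrite mulrA; have := eq_uptoMr 'X (eq_upto_leq (leqnSn _) exp_poly_omexp).
by rewrite mul1r.
Qed.

Lemma expm1_div_bernoulli : eq_upto N.+2 (expm1_div_poly * bernoulli_poly) 1.
Proof.
move=> i hi; rewrite -(fmul_fps_poly _ _ hi) fmul_finv.
  by rewrite -polyC1 coefC /fone; case: i {hi}.
by rewrite /fshift /exp_minus_one /= div1r invr1 oner_neq0.
Qed.

Lemma deriv_Li2_omexp_polyE : eq_upto N Li2_omexp_poly^`() bernoulli_poly.
Proof.
set F := Li2_omexp_poly^`().
have := eq_uptoMl F (eq_upto_leq (leqW (leqnSn _)) expm1_div_bernoulli).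
rewrite mulr1 mulrA => /eq_upto_sym/eq_upto_trans; apply.
by have := eq_uptoMr bernoulli_poly deriv_Li2_omexp_poly_expm1; rewrite mul1r.
Qed.

End DilogOfOneMinusExp.

Lemma coef_Li2_omexp_div_t (R : numFieldType) l :
  fshift (fcomp (Li_ser R 2) (one_minus_exp_neg R)) l =
  Defs.finv (fshift (exp_minus_one R)) l / (l.+1)%:R.
Proof.
have hl : (l.+1 < l.+3)%N by [].
rewrite /fshift -(coef_fps_poly _ hl) (fps_poly_fcomp (Li_ser R 2) _ hl) //.
have := @deriv_Li2_omexp_polyE R l.+1 l (ltnSn l).
rewrite coef_deriv coef_fps_poly 1?ltnW // => <-.
by rewrite -[X in X / _]mulr_natr mulfK ?natrS_neq0.
Qed.

Theorem theorem1 (R : numFieldType) (x : R) (n : nat) :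
  polyBer2 2%:Z n x =
  \sum_(l < n.+1) 'C(n, l)%:R * (Bernoulli R l * Ber2 (n - l)%N x) / (l.+1)%:R.
Proof.
rewrite /polyBer2 /polyBer2_gf fmulA /fmul mulr_sumr.
apply: eq_bigr => l _; rewrite coef_Li2_omexp_div_t /Bernoulli /Ber2 /fmul.
set A := Defs.finv _ l; set B := \sum_(i < _) _.
have hl : (l <= n)%N by rewrite -ltnS.
rewrite -(bin_fact hl) !natrM.
have f1 := fact_neq0 R l; have f2 := fact_neq0 R (n - l).
ring.
Qed.
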